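(* Let $H(x,p)=\frac12\left(H_{11}p^2+2H_{12}px+H_{22}x^2\right)$ with real coefficients satisfying $H_{11}H_{22}-H_{12}^2=-\alpha^2$, $\alpha>0$. For $t\in\mathbb R$ and $\tau=it$, let $\mathcal P_\tau=\exp(\tau\mathcal L_{X_H})\mathcal P_{Sch}$ be the complex line field on $\mathbb R^2$ spanned by $X_{w_\tau}$, where $$w_\tau=\exp(\tau X_H)(x)=\left(\cos(\alpha t)+iH_{12}\frac{\sin(\alpha t)}{\alpha}\right)x+iH_{11}\frac{\sin(\alpha t)}{\alpha}\,p .$$ Then $\mathcal P_\tau$ is: (a) anti-Kähler if $H_{11}\sin(2\alpha t)<0$; (b) the Schrödinger polarization if $H_{11}\sin(\alpha t)=0$; (c) Kähler if $H_{11}\sin(2\alpha t)>0$; (d) the real polarization $\langle X_{H_{12}x+H_{11}p}\rangle_{\mathbb C}$ if $H_{11}\cos(\alpha t)=0$.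
   Context: Work on $\mathbb R^2$ with coordinates $(x,p)$ and symplectic form $\omega=dx\wedge dp$. The Hamiltonian vector field of a function $f$ is $X_f=\frac{\partial f}{\partial p}\frac{\partial}{\partial x}-\frac{\partial f}{\partial x}\frac{\partial}{\partial p}$. For real $t$, $\exp(tX_H)(x)$ denotes the function $x\circ\phi_t$ where $\phi_t$ is the time-$t$ flow of $X_H$; $\exp(\tau X_H)(x)$ for $\tau=it$ is its analytic continuation in $t$, which gives the displayed formula for $w_\tau$. The Schrödinger (vertical) polarization is $\mathcal P_{Sch}=\langle X_x\rangle_{\mathbb C}=\langle\partial/\partial p\rangle_{\mathbb C}$, and $\mathcal P_\tau=\langle X_{w_\tau}\rangle_{\mathbb C}$. For a complex linear function $w$ on $\mathbb R^2$ write $\frac{i}{2}dw\wedge d\bar w=c\,\omega$; the polarization $\langle X_w\rangle_{\mathbb C}$ is called Kähler if $c>0$ (it is then $T^{(0,1)}$ of a complex structure $J$ for which $(\mathbb R^2,\omega,J)$ is Kähler, $w$ being $J$-holomorphic), anti-Kähler if $c<0$, and real if $c=0$. *)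

From Stdlib Require Import Reals.
From Coquelicot Require Import Coquelicot.
Open Scope R_scope.

Definition clin := (C * C)%type.
Definition clin_eval (w : clin) (x p : R) : C :=
  Cplus (Cmult (fst w) (RtoC x)) (Cmult (snd w) (RtoC p)).

(* Complex vector fields / 1-forms with constant coefficients on R^2:
   (u1, u2) means u1 d/dx + u2 d/dp  (resp. u1 dx + u2 dp). *)
Definition cvec := (C * C)%type.

Definition dform (w : clin) : cvec := (fst w, snd w).
Definition cconj_lin (w : clin) : clin := (Cconj (fst w), Cconj (snd w)).
(* Coefficient of dx /\ dp in (a1 dx + b1 dp) /\ (a2 dx + b2 dp). *)
Definition wedge (u v : cvec) : C :=
  Cminus (Cmult (fst u) (snd v)) (Cmult (snd u) (fst v)).

(* Hamiltonian vector field X_f = (df/dp) d/dx - (df/dx) d/dp, for w linear. *)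
Definition ham_vf (w : clin) : cvec := (snd w, Copp (fst w)).

Definition cspan (v : cvec) : cvec -> Prop :=
  fun u => exists l : C, u = (Cmult l (fst v), Cmult l (snd v)).
Definition polarization (w : clin) : cvec -> Prop := cspan (ham_vf w).

(* c with (i/2) dw /\ d(wbar) = c omega, omega = dx /\ dp. *)
Definition kahler_coef_is (w : clin) (c : R) : Prop :=
  Cmult (Cdiv Ci (RtoC 2)) (wedge (dform w) (dform (cconj_lin w))) = RtoC c.
Definition is_Kahler (w : clin) : Prop := exists c, kahler_coef_is w c /\ 0 < c.
Definition is_antiKahler (w : clin) : Prop := exists c, kahler_coef_is w c /\ c < 0.
Definition is_real_pol (w : clin) : Prop := exists c, kahler_coef_is w c /\ c = 0.

Definition x_fun : clin := (RtoC 1, RtoC 0).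
Definition P_Sch : cvec -> Prop := polarization x_fun.

Definition rlin (q r : R) : clin := (RtoC q, RtoC r).

Definition w_tau (H11 H12 alpha t : R) : clin :=
  ((cos (alpha * t) : R, H12 * sin (alpha * t) / alpha),
   ((0 : R), H11 * sin (alpha * t) / alpha)).

Definition Ham (H11 H12 H22 : R) (x p : R) : R :=
  / 2 * (H11 * p ^ 2 + 2 * H12 * p * x + H22 * x ^ 2).

(* The Kähler coefficient of a linear w = a x + b p is Im (conj a * b); for w_tau it equals
   H11 sin(2 alpha t) / (2 alpha), whose sign gives (a) and (c) and which vanishes in (d).
   In (b) and (d), w_tau is a nonzero complex multiple of x, resp. of H12 x + H11 p, and a
   nonzero multiple of w spans the same polarization; the determinant condition
   H12^2 = alpha^2 + H11 H22 is what makes the multiplier of modulus 1, resp. 1/alpha. *)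
From Stdlib Require Import Reals Lra FunctionalExtensionality PropExtensionality.
From Coquelicot Require Import Coquelicot.
Open Scope R_scope.

Definition clin_scale (k : C) (w : clin) : clin := (Cmult k (fst w), Cmult k (snd w)).

Lemma C_neq0_of_norm2 (z : C) : fst z ^ 2 + snd z ^ 2 <> 0 -> z <> RtoC 0.
Proof. intros Hz ->. apply Hz. simpl. ring. Qed.

Lemma cspan_scale (k : C) (v : cvec) : k <> RtoC 0 ->
  cspan (Cmult k (fst v), Cmult k (snd v)) = cspan v.
Proof.
  intros Hk. apply functional_extensionality; intro u.
  apply propositional_extensionality; unfold cspan; simpl; split.
  - intros [l ->]. exists (Cmult l k). f_equal; apply Cmult_assoc.
  - intros [l ->]. exists (Cdiv l k).
    f_equal; unfold Cdiv; rewrite Cmult_assoc, <- (Cmult_assoc l), Cinv_l, Cmult_1_r; auto.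
Qed.

Lemma polarization_scale (k : C) (w : clin) : k <> RtoC 0 ->
  polarization (clin_scale k w) = polarization w.
Proof.
  intros Hk. unfold polarization. rewrite <- (cspan_scale k (ham_vf w) Hk).
  unfold ham_vf, clin_scale; simpl. f_equal. f_equal. ring.
Qed.

Lemma kahler_coef_Im (w : clin) : kahler_coef_is w (Im (Cmult (Cconj (fst w)) (snd w))).
Proof.
  destruct w as [[a1 a2] [b1 b2]].
  unfold kahler_coef_is, wedge, dform, cconj_lin; simpl.
  apply injective_projections; simpl; field.
Qed.

Lemma kahler_coef_w_tau (H11 H12 alpha t : R) : 0 < alpha ->
  kahler_coef_is (w_tau H11 H12 alpha t) (H11 * sin (2 * alpha * t) / (2 * alpha)).
Proof.
  intros Ha. replace (H11 * sin (2 * alpha * t) / (2 * alpha))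
    with (Im (Cmult (Cconj (fst (w_tau H11 H12 alpha t))) (snd (w_tau H11 H12 alpha t)))).
  - apply kahler_coef_Im.
  - replace (2 * alpha * t) with (2 * (alpha * t)) by ring. rewrite sin_2a.
    unfold w_tau; simpl. field. lra.
Qed.

Section Degenerate_cases.

Variables H11 H12 H22 alpha t : R.
Hypothesis alpha_gt0 : 0 < alpha.
Hypothesis det_H : H11 * H22 - H12 ^ 2 = - alpha ^ 2.

Lemma w_tau_parallel_x : H11 * sin (alpha * t) = 0 ->
  exists2 k, k <> RtoC 0 & w_tau H11 H12 alpha t = clin_scale k x_fun.
Proof.
  intros Hs.
  assert (Hsc : sin (alpha * t) ^ 2 + cos (alpha * t) ^ 2 = 1)
    by (rewrite <- (sin2_cos2 (alpha * t)); unfold Rsqr; ring).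
  set (s := sin (alpha * t)) in *. set (c := cos (alpha * t)) in *.
  assert (H12s : H12 ^ 2 * s ^ 2 = alpha ^ 2 * s ^ 2).
  { replace (H12 ^ 2) with (alpha ^ 2 + H11 * H22) by lra.
    replace ((alpha ^ 2 + H11 * H22) * s ^ 2) with (alpha ^ 2 * s ^ 2 + H22 * s * (H11 * s))
      by ring.
    rewrite Hs. ring. }
  exists (c, H12 * s / alpha).
  - apply C_neq0_of_norm2; cbn [fst snd].
    replace ((H12 * s / alpha) ^ 2) with (H12 ^ 2 * s ^ 2 / alpha ^ 2) by (field; lra).
    rewrite H12s. replace (alpha ^ 2 * s ^ 2 / alpha ^ 2) with (s ^ 2) by (field; lra). lra.
  - unfold w_tau, clin_scale, x_fun. fold s c.
    repeat (apply injective_projections; simpl); rewrite ?Hs; field; lra.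
Qed.

(* The multiplier c H12 / alpha^2 + i s / alpha is (c + i H12 s / alpha) / H12 when H11 = 0
   (then H12^2 = alpha^2) and i s / alpha when c = 0. *)
Lemma w_tau_parallel_rlin : H11 * cos (alpha * t) = 0 ->
  exists2 k, k <> RtoC 0 & w_tau H11 H12 alpha t = clin_scale k (rlin H12 H11).
Proof.
  intros Hc.
  assert (Hsc : sin (alpha * t) ^ 2 + cos (alpha * t) ^ 2 = 1)
    by (rewrite <- (sin2_cos2 (alpha * t)); unfold Rsqr; ring).
  set (s := sin (alpha * t)) in *. set (c := cos (alpha * t)) in *.
  assert (H12c : H12 ^ 2 * c = alpha ^ 2 * c).
  { replace (H12 ^ 2) with (alpha ^ 2 + H11 * H22) by lra.
    replace ((alpha ^ 2 + H11 * H22) * c) with (alpha ^ 2 * c + H22 * (H11 * c)) by ring.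
    rewrite Hc. ring. }
  exists (c * H12 / alpha ^ 2, s / alpha).
  - apply C_neq0_of_norm2; cbn [fst snd].
    replace ((c * H12 / alpha ^ 2) ^ 2 + (s / alpha) ^ 2)
      with ((H12 ^ 2 * c * c + alpha ^ 2 * s ^ 2) / alpha ^ 4) by (field; lra).
    rewrite H12c. replace ((alpha ^ 2 * c * c + alpha ^ 2 * s ^ 2) / alpha ^ 4)
      with ((s ^ 2 + c ^ 2) / alpha ^ 2) by (field; lra).
    rewrite Hsc. apply Rgt_not_eq, Rdiv_lt_0_compat; nra.
  - unfold w_tau, clin_scale, rlin. fold s c.
    repeat (apply injective_projections; simpl).
    + transitivity (H12 ^ 2 * c / alpha ^ 2); [rewrite H12c | ]; field; lra.
    + field. lra.
    + transitivity (H12 / alpha ^ 2 * (H11 * c)); [rewrite Hc; ring | field; lra].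
    + field. lra.
Qed.

End Degenerate_cases.

Theorem proposition3p1 (H11 H12 H22 alpha t : R) :
  0 < alpha ->
  H11 * H22 - H12 ^ 2 = - alpha ^ 2 ->
  let w := w_tau H11 H12 alpha t in
  (H11 * sin (2 * alpha * t) < 0 -> is_antiKahler w) /\
  (H11 * sin (alpha * t) = 0 -> polarization w = P_Sch) /\
  (H11 * sin (2 * alpha * t) > 0 -> is_Kahler w) /\
  (H11 * cos (alpha * t) = 0 ->
     is_real_pol w /\ polarization w = polarization (rlin H12 H11)).
Proof.
  intros Ha Hdet w; subst w.
  assert (Hcoef := kahler_coef_w_tau H11 H12 alpha t Ha).
  assert (Hinv : 0 < / (2 * alpha)) by (apply Rinv_0_lt_compat; lra).
  split; [|split; [|split]].
  - intros Hn. eexists; split; [exact Hcoef|]. unfold Rdiv. nra.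
  - intros Hs. destruct (w_tau_parallel_x H11 H12 H22 alpha t Ha Hdet Hs) as [k Hk ->].
    exact (polarization_scale k x_fun Hk).
  - intros Hp. eexists; split; [exact Hcoef|]. unfold Rdiv. nra.
  - intros Hc. split.
    + eexists; split; [exact Hcoef|].
      replace (2 * alpha * t) with (2 * (alpha * t)) by ring. rewrite sin_2a.
      replace (H11 * (2 * sin (alpha * t) * cos (alpha * t)))
        with (2 * sin (alpha * t) * (H11 * cos (alpha * t))) by ring.
      rewrite Hc. unfold Rdiv. ring.
    + destruct (w_tau_parallel_rlin H11 H12 H22 alpha t Ha Hdet Hc) as [k Hk ->].
      exact (polarization_scale k _ Hk).
Qed.
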